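(* Let $\mathcal{F}=(W,\preceq,\mathcal{V})$ be a finite poset model and $w_1,w_2\in W$. If $w_1\equiv_\gamma w_2$ then $w_1\equiv_\eta w_2$.
   Context: Fix a set PL of proposition letters. A poset model is $\mathcal{F}=(W,\preceq,\mathcal{V})$ with $(W,\preceq)$ a partial order and $\mathcal{V}:\mathrm{PL}\to\mathcal{P}(W)$. For $m,n\in\mathbb{N}$, $[m;n]=\{i: m\le i\le n\}$, $[m;n)=\{i:m\le i<n\}$, $(m;n)=\{i:m<i<n\}$. An undirected path of length $\ell$ from $w$ is $\pi:[0;\ell]\to W$ with $\pi(0)=w$ and, for each $i\in[0;\ell)$, $\pi(i)\preceq\pi(i+1)$ or $\pi(i+1)\preceq\pi(i)$. A $\pm$-path is an undirected path of length $\ell\ge2$ with $\pi(0)\preceq\pi(1)$ and $\pi(\ell)\preceq\pi(\ell-1)$. Formulas are built by $\Phi::=p\mid\neg\Phi\mid\Phi_1\wedge\Phi_2\mid M(\Phi_1,\Phi_2)$, $p\in\mathrm{PL}$, with $M=\eta$ in SLCS$_\eta$ and $M=\gamma$ in SLCS$_\gamma$. Semantics on $\mathcal{F}$: $w\models p$ iff $w\in\mathcal{V}(p)$; negation and conjunction as usual; $w\models\gamma(\Phi_1,\Phi_2)$ iff there is a $\pm$-path $\pi:[0;\ell]\to W$ from $w$ with $\pi(\ell)\models\Phi_2$ and $\pi(i)\models\Phi_1$ for all $i\in(0;\ell)$; $w\models\eta(\Phi_1,\Phi_2)$ iff there is a $\pm$-path $\pi:[0;\ell]\to W$ from $w$ with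 $\pi(\ell)\models\Phi_2$ and $\pi(i)\models\Phi_1$ for all $i\in[0;\ell)$. $w_1\equiv_\gamma w_2$ (resp. $\equiv_\eta$) means $w_1,w_2$ satisfy the same SLCS$_\gamma$ (resp. SLCS$_\eta$) formulas in $\mathcal{F}$. *)

From mathcomp Require Import all_boot.
Set Implicit Arguments. Unset Strict Implicit. Unset Printing Implicit Defensive.

Record poset_model (PL : Type) := PosetModel {
  pm_W :> finType;
  pm_le : rel pm_W;
  pm_V : PL -> pred pm_W;
  pm_refl : reflexive pm_le;
  pm_antisym : antisymmetric pm_le;
  pm_trans : transitive pm_le
}.

Section Semantics.
Variable PL : Type.
Variable F : poset_model PL.
Local Notation W := (pm_W F).
Local Notation le := (@pm_le PL F).

(* an undirected path of length l: pi restricted to [0;l] *)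
Definition undirected_path (pi : nat -> W) (l : nat) : Prop :=
  forall i, i < l -> le (pi i) (pi i.+1) \/ le (pi i.+1) (pi i).

Definition pm_path (w : W) (pi : nat -> W) (l : nat) : Prop :=
  2 <= l /\ pi 0 = w /\ undirected_path pi l /\
  le (pi 0) (pi 1) /\ le (pi l) (pi l.-1).

End Semantics.

Inductive modality := MGamma | MEta.

Inductive form (PL : Type) :=
| FVar of PL
| FNeg of form PL
| FAnd of form PL & form PL
| FM of form PL & form PL.

Fixpoint sat (PL : Type) (F : poset_model PL) (m : modality)
    (phi : form PL) (w : pm_W F) : Prop :=
  match phi with
  | FVar p => @pm_V PL F p w
  | FNeg f => ~ @sat PL F m f w
  | FAnd f g => @sat PL F m f w /\ @sat PL F m g w
  | FM f g =>
      match m with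
      | MGamma => exists (pi : nat -> pm_W F) (l : nat),
          @pm_path PL F w pi l /\ @sat PL F m g (pi l) /\
          (forall i, 0 < i < l -> @sat PL F m f (pi i))
      | MEta => exists (pi : nat -> pm_W F) (l : nat),
          @pm_path PL F w pi l /\ @sat PL F m g (pi l) /\
          (forall i, i < l -> @sat PL F m f (pi i))
      end
  end.

Definition log_equiv (PL : Type) (F : poset_model PL) (m : modality)
    (w1 w2 : pm_W F) : Prop :=
  forall phi : form PL, @sat PL F m phi w1 <-> @sat PL F m phi w2.

From mathcomp Require Import all_boot.
From Stdlib Require Import Setoid.

(* Since every ±-path from w starts at w, [eta(f, g)] is equivalent to
   [f /\ gamma(f, g)]. Translating formulas along this equivalence maps every
   SLCS_eta formula to an SLCS_gamma formula with the same extension, so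
   gamma-equivalent points are eta-equivalent. *)

Fixpoint eta_to_gamma {PL : Type} (phi : form PL) : form PL :=
  match phi with
  | FVar p => FVar p
  | FNeg f => FNeg (eta_to_gamma f)
  | FAnd f g => FAnd (eta_to_gamma f) (eta_to_gamma g)
  | FM f g => FAnd (eta_to_gamma f) (FM (eta_to_gamma f) (eta_to_gamma g))
  end.

Lemma forall_ltn_split (P : nat -> Prop) (l : nat) : 0 < l ->
  (forall i, i < l -> P i) <-> P 0 /\ (forall i, 0 < i < l -> P i).
Proof.
move=> l_gt0; split=> [allP | [P0 allP] [|i] ilt //].
  by split=> [|i /andP [_ ilt]]; apply: allP.
by apply: allP; rewrite ilt.
Qed.

Lemma sat_eta_to_gamma (PL : Type) (F : poset_model PL) (phi : form PL)
    (w : pm_W F) :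
  sat MEta phi w <-> sat MGamma (eta_to_gamma phi) w.
Proof.
elim: phi w => [p | f IHf | f IHf g IHg | f IHf g IHg] w //=.
- by rewrite IHf.
- by rewrite IHf IHg.
split.
- move=> [pi [l [pi_path [gl fpre]]]].
  have [l_ge2 [pi0 _]] := pi_path.
  have /forall_ltn_split [|f0 fint] := fpre; first exact: leq_trans l_ge2.
  split; first by rewrite -IHf -pi0.
  exists pi, l; split=> //; split=> [|i /fint]; by rewrite -?IHg -?IHf.
- move=> [fw [pi [l [pi_path [gl fint]]]]].
  have [l_ge2 [pi0 _]] := pi_path.
  exists pi, l; split=> //; split; first by rewrite IHg.
  apply/forall_ltn_split; first exact: leq_trans l_ge2.
  by split=> [|i /fint]; rewrite IHf ?pi0.
Qed.

Theorem proposition3 (PL : Type) (F : poset_model PL) (w1 w2 : pm_W F) :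
  @log_equiv PL F MGamma w1 w2 -> @log_equiv PL F MEta w1 w2.
Proof. by move=> gamma_eq phi; rewrite !sat_eta_to_gamma. Qed.
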